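(* Let $\mathscr{H}$ be a complex Hilbert space and $A\in\mathbb{B}(\mathscr{H})$. Then $$\frac{1}{4}\, w^2\left(|A|+i|A^*|\right)+\frac{1}{8}\left\||A|^2+|A^*|^2\right\|+\frac{1}{4}\,w\left(|A||A^*|\right)\leq \frac{1}{2}\left\|A^*A+AA^*\right\|.$$
   Context: $\mathbb{B}(\mathscr{H})$ denotes the algebra of bounded linear operators on $\mathscr{H}$; $\|\cdot\|$ is the operator norm. For $T\in\mathbb{B}(\mathscr{H})$, $|T|=(T^*T)^{1/2}$, and $w(T)=\sup\{|\langle Tx,x\rangle|: \|x\|=1\}$ is the numerical radius. *)

From HB Require Import structures.
From mathcomp Require Import all_boot all_order all_algebra.
From mathcomp Require Import boolp classical_sets reals.
From mathcomp Require Import complex.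
Set Implicit Arguments. Unset Strict Implicit. Unset Printing Implicit Defensive.
Import Order.TTheory GRing.Theory Num.Theory.
Local Open Scope ring_scope.

Definition is_inner_product (R : realType) (V : lmodType R[i])
  (ip : V -> V -> R[i]) : Prop :=
  [/\ (forall (a : R[i]) (x1 x2 y : V), ip (a *: x1 + x2) y = a * ip x1 y + ip x2 y),
      (forall x y : V, ip y x = conjc (ip x y)),
      (forall x : V, 0 <= ip x x) &
      (forall x : V, ip x x = 0 -> x = 0)].

Definition hnorm (R : realType) (V : lmodType R[i]) (ip : V -> V -> R[i])
  (x : V) : R := Num.sqrt (complex.Re (ip x x)).

Definition hcomplete (R : realType) (V : lmodType R[i]) (ip : V -> V -> R[i]) : Prop :=
  forall u : nat -> V,
    (forall e : R, 0 < e -> exists N : nat, forall m n : nat,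
        (N <= m)%N -> (N <= n)%N -> hnorm ip (u m - u n) < e) ->
    exists l : V, forall e : R, 0 < e -> exists N : nat, forall n : nat,
        (N <= n)%N -> hnorm ip (u n - l) < e.

Definition bounded_op (R : realType) (V : lmodType R[i]) (ip : V -> V -> R[i])
  (T : V -> V) : Prop :=
  (forall (a : R[i]) (x y : V), T (a *: x + y) = a *: T x + T y) /\
  exists M : R, forall x : V, hnorm ip (T x) <= M * hnorm ip x.

Definition opnorm (R : realType) (V : lmodType R[i]) (ip : V -> V -> R[i])
  (T : V -> V) : R :=
  sup [set r : R | exists x : V, hnorm ip x = 1 /\ r = hnorm ip (T x)].

Definition numrad (R : realType) (V : lmodType R[i]) (ip : V -> V -> R[i])
  (T : V -> V) : R :=
  sup [set r : R | exists x : V, hnorm ip x = 1 /\ r = Normc.normc (ip (T x) x)].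

Definition is_adjoint (R : realType) (V : lmodType R[i]) (ip : V -> V -> R[i])
  (T S : V -> V) : Prop :=
  forall x y : V, ip (T x) y = ip x (S y).

Definition positive_op (R : realType) (V : lmodType R[i]) (ip : V -> V -> R[i])
  (P : V -> V) : Prop :=
  bounded_op ip P /\ forall x : V, 0 <= ip (P x) x.

(* P = |T| := (T^* T)^{1/2}: the (unique) positive square root of T^* T,
   where Ts is the adjoint of T. *)
Definition is_abs_op (R : realType) (V : lmodType R[i]) (ip : V -> V -> R[i])
  (T Ts P : V -> V) : Prop :=
  positive_op ip P /\ forall x : V, P (P x) = Ts (T x).

From HB Require Import structures.
From mathcomp Require Import all_boot all_order all_algebra.
From mathcomp Require Import boolp classical_sets reals.
From mathcomp Require Import complex.
From mathcomp Require Import ring lra.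
Set Implicit Arguments. Unset Strict Implicit. Unset Printing Implicit Defensive.
Import Order.TTheory GRing.Theory Num.Theory.
Local Open Scope ring_scope.
Local Open Scope complex_scope.
Local Open Scope classical_set_scope.
Local Notation Re := complex.Re.
Local Notation Im := complex.Im.
Local Notation normc := Normc.normc.

(* Write P = |A|, Q = |A^*| and S = P^2 + Q^2 = A^*A + AA^*.  For a unit vector x,
   <Sx,x> = ||Px||^2 + ||Qx||^2 <= ||S||.  Since <Px,x> and <Qx,x> are real,
   |<(P + iQ)x,x>|^2 = <Px,x>^2 + <Qx,x>^2 <= ||Px||^2 + ||Qx||^2 by Cauchy-Schwarz,
   and |<PQx,x>| = |<Qx,Px>| <= ||Px|| ||Qx|| <= (||Px||^2 + ||Qx||^2)/2.  Hence
   w^2(P + iQ) <= ||S||, w(PQ) <= ||S||/2, and the left-hand side is at most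
   ||S||/4 + ||S||/8 + ||S||/8. *)

Section ComplexParts.
Variable R : rcfType.
Implicit Types a b : R[i].

Lemma ReD a b : Re (a + b) = Re a + Re b. Proof. by case: a; case: b. Qed.
Lemma ImD a b : Im (a + b) = Im a + Im b. Proof. by case: a; case: b. Qed.
Lemma ReM a b : Re (a * b) = Re a * Re b - Im a * Im b. Proof. by case: a; case: b. Qed.
Lemma ImM a b : Im (a * b) = Re a * Im b + Im a * Re b. Proof. by case: a; case: b. Qed.
Lemma ReJ a : Re (a^*) = Re a. Proof. by case: a. Qed.
Lemma ImJ a : Im (a^*) = - Im a. Proof. by case: a. Qed.

Lemma eq_ReIm a b : Re a = Re b -> Im a = Im b -> a = b.
Proof. by case: a => ? ?; case: b => ? ? /= -> ->. Qed.

Lemma normc_ge0 a : 0 <= normc a.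
Proof. by case: a => ? ?; exact: sqrtr_ge0. Qed.

Lemma sqr_normc_ReIm a : normc a ^+ 2 = Re a ^+ 2 + Im a ^+ 2.
Proof. by case: a => ? ? /=; rewrite sqr_sqrtr // addr_ge0 // sqr_ge0. Qed.

End ComplexParts.

Section Supremum.
Variable R : realType.
Implicit Types E : set R.

Lemma sup_ge0 E : has_ubound E -> (forall r, E r -> 0 <= r) -> 0 <= sup E.
Proof.
move=> ubE E_ge0; have [[r Er]|/nonemptyPn ->] := pselect (E !=set0).
  exact: le_trans (E_ge0 _ Er) (ub_le_sup ubE Er).
by rewrite sup0.
Qed.

(* The hypothesis [0 <= c] covers the empty set, whose supremum is [0]. *)
Lemma sup_le_ub E c : 0 <= c -> ubound E c -> sup E <= c.
Proof.
move=> c_ge0 ubc; have [E0|/nonemptyPn ->] := pselect (E !=set0).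
  exact: ge_sup.
by rewrite sup0.
Qed.

End Supremum.

Section InnerProduct.
Variables (R : realType) (V : lmodType R[i]) (ip : V -> V -> R[i]).
Hypothesis Hip : is_inner_product ip.
Implicit Types x y z : V.

Lemma ipDl x y z : ip (x + y) z = ip x z + ip y z.
Proof. by case: Hip => ipl _ _ _; rewrite -[x in LHS]scale1r ipl mul1r. Qed.

Lemma ip0l z : ip 0 z = 0.
Proof. by apply: (addrI (ip 0 z)); rewrite -ipDl !addr0. Qed.

Lemma ipZl a x z : ip (a *: x) z = a * ip x z.
Proof. by case: Hip => ipl _ _ _; rewrite -[a *: x]addr0 ipl ip0l addr0. Qed.

Lemma ipJ x y : ip y x = (ip x y)^*.
Proof. by case: Hip. Qed.

Lemma ipDr x y z : ip z (x + y) = ip z x + ip z y.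
Proof. by rewrite ipJ ipDl rmorphD /= -!ipJ. Qed.

Lemma ipZr a x z : ip z (a *: x) = a^* * ip z x.
Proof. by rewrite ipJ ipZl rmorphM /= -!ipJ. Qed.

Lemma ip0r z : ip z 0 = 0.
Proof. by rewrite ipJ ip0l rmorph0. Qed.

Lemma Im_ipxx x : Im (ip x x) = 0.
Proof. by case: Hip => _ _ ip_ge0 _; exact: ger0_Im. Qed.

Lemma hnorm_ge0 x : 0 <= hnorm ip x.
Proof. exact: sqrtr_ge0. Qed.

Lemma sqr_hnorm x : hnorm ip x ^+ 2 = Re (ip x x).
Proof.
case: Hip => _ _ ip_ge0 _.
by rewrite sqr_sqrtr //; move: (ip_ge0 x); rewrite lecE => /andP[].
Qed.

Lemma hnorm_eq0 x : hnorm ip x = 0 -> x = 0.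
Proof.
case: Hip => _ _ _ ipxx0 nx0; apply: ipxx0; apply: eq_ReIm; last exact: Im_ipxx.
by rewrite -sqr_hnorm nx0 expr0n.
Qed.

Lemma sqr_hnorm_add_scale x y (t : R) :
  hnorm ip (x + t%:C *: y) ^+ 2
  = hnorm ip x ^+ 2 + 2 * t * Re (ip x y) + t ^+ 2 * hnorm ip y ^+ 2.
Proof.
rewrite !sqr_hnorm !(ipDl, ipDr, ipZl, ipZr) (ipJ y x).
by rewrite !(ReD, ReM, ImM, ReJ, ImJ) (Im_ipxx y) /=; ring.
Qed.

(* Evaluate the nonnegative quadratic [t |-> ||x + t y||^2] at its minimiser
   [t = - Re <x,y> / ||y||^2]. *)
Lemma Re_ip_sqr_le x y : Re (ip x y) ^+ 2 <= hnorm ip x ^+ 2 * hnorm ip y ^+ 2.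
Proof.
have [ny0|ny_neq0] := eqVneq (hnorm ip y) 0.
  by rewrite ny0 (hnorm_eq0 ny0) ip0r expr0n /= !mulr0.
set b := Re (ip x y); set c := hnorm ip y ^+ 2.
have c_gt0 : 0 < c by rewrite exprn_gt0 // lt_def ny_neq0 hnorm_ge0.
have := sqr_ge0 (hnorm ip (x + (- b / c)%:C *: y)).
rewrite sqr_hnorm_add_scale -/b -/c; set t := - b / c.
have tc : t * c = - b by rewrite /t mulrVK // unitfE gt_eqF.
nra.
Qed.

(* Apply [Re_ip_sqr_le] to [x] and [<x,y> y], for which [Re <x, <x,y> y> = |<x,y>|^2]. *)
Lemma normc_ip_le x y : normc (ip x y) <= hnorm ip x * hnorm ip y.
Proof.
set n := normc (ip x y).
have Re_n2 : Re (ip x (ip x y *: y)) = n ^+ 2.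
  by rewrite ipZr ReM ReJ ImJ sqr_normc_ReIm; ring.
have ny2 : hnorm ip (ip x y *: y) ^+ 2 = n ^+ 2 * hnorm ip y ^+ 2.
  by rewrite !sqr_hnorm ipZl ipZr ReM ImM ReM ReJ ImJ Im_ipxx sqr_normc_ReIm; ring.
have := Re_ip_sqr_le x (ip x y *: y); rewrite Re_n2 ny2.
have := normc_ge0 (ip x y); have := hnorm_ge0 x; have := hnorm_ge0 y.
rewrite -/n; move: (hnorm ip x) (hnorm ip y) => a c c_ge0 a_ge0 n_ge0 n4_le.
have n2_le : n ^+ 2 <= (a * c) ^+ 2.
  have [->|n_neq0] := eqVneq n 0; first by rewrite expr0n sqr_ge0.
  have n2_gt0 : 0 < n ^+ 2 by rewrite exprn_gt0 // lt_def n_neq0.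
  by rewrite -(ler_pM2l n2_gt0) -expr2 (le_trans n4_le) // exprMn mulrCA.
have ac_ge0 : 0 <= a * c by rewrite mulr_ge0.
nra.
Qed.

Lemma Re_ip_le x y : Re (ip x y) <= hnorm ip x * hnorm ip y.
Proof.
apply: le_trans (normc_ip_le x y).
have := sqr_normc_ReIm (ip x y); have := normc_ge0 (ip x y).
have := sqr_ge0 (Im (ip x y)).
move: (Re _) (Im _) (normc _) => r i n *; nra.
Qed.

Lemma hnorm_leD x y : hnorm ip (x + y) <= hnorm ip x + hnorm ip y.
Proof.
have := sqr_hnorm (x + y); rewrite !(ipDl, ipDr) !ReD (ipJ y x) ReJ -!sqr_hnorm.
have := Re_ip_le y x; have := hnorm_ge0 x; have := hnorm_ge0 y.
have := hnorm_ge0 (x + y).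
move: (hnorm ip (x + y)) (hnorm ip x) (hnorm ip y) (Re _) => s a c r *; nra.
Qed.

End InnerProduct.

Section Operators.
Variables (R : realType) (V : lmodType R[i]) (ip : V -> V -> R[i]).
Hypothesis Hip : is_inner_product ip.
Implicit Types (T U : V -> V) (x y : V).

Definition op_bounded_by T (M : R) := forall x, hnorm ip (T x) <= M * hnorm ip x.

Lemma op_bounded_by_comp T U M N :
  op_bounded_by T M -> op_bounded_by U N -> op_bounded_by (T \o U) (`|M| * `|N|).
Proof.
move=> TM UN x /=; apply: le_trans (TM (U x)) _.
apply: le_trans (ler_wpM2r (hnorm_ge0 _ _) (ler_norm M)) _.
rewrite -mulrA ler_wpM2l // (le_trans (UN x)) // ler_wpM2r ?hnorm_ge0 ?ler_norm //.
Qed.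

Lemma op_bounded_by_add T U M N :
  op_bounded_by T M -> op_bounded_by U N -> op_bounded_by (fun x => T x + U x) (M + N).
Proof.
move=> TM UN x; rewrite mulrDl.
exact: le_trans (hnorm_leD Hip _ _) (lerD (TM x) (UN x)).
Qed.

Lemma opnorm_ge T M x :
  op_bounded_by T M -> hnorm ip x = 1 -> hnorm ip (T x) <= opnorm ip T.
Proof.
move=> TM x1; apply: ub_le_sup; last by exists x.
by exists M => _ [y [y1 ->]]; rewrite -[M]mulr1 -y1.
Qed.

Lemma opnorm_ge0 T M : op_bounded_by T M -> 0 <= opnorm ip T.
Proof.
move=> TM; apply: sup_ge0; last by move=> _ [y [_ ->]]; exact: hnorm_ge0.
by exists M => _ [y [y1 ->]]; rewrite -[M]mulr1 -y1.
Qed.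

Lemma numrad_le T c : 0 <= c ->
  (forall x, hnorm ip x = 1 -> normc (ip (T x) x) <= c) -> numrad ip T <= c.
Proof. by move=> c_ge0 Tc; apply: sup_le_ub => // _ [x [x1 ->]]; exact: Tc. Qed.

Lemma numrad_sqr_le T c : 0 <= c ->
  (forall x, hnorm ip x = 1 -> normc (ip (T x) x) ^+ 2 <= c) -> numrad ip T ^+ 2 <= c.
Proof.
move=> c_ge0 Tc.
have Tsqrtc x : hnorm ip x = 1 -> normc (ip (T x) x) <= Num.sqrt c.
  by move=> x1; rewrite -ler_sqr ?nnegrE ?normc_ge0 ?sqrtr_ge0 // sqr_sqrtr // Tc.
have w_ge0 : 0 <= numrad ip T.
  apply: sup_ge0; last by move=> _ [x [_ ->]]; exact: normc_ge0.
  by exists (Num.sqrt c) => _ [x [x1 ->]]; exact: Tsqrtc.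
rewrite -(sqr_sqrtr c_ge0) ler_sqr ?nnegrE ?sqrtr_ge0 //.
exact: numrad_le (sqrtr_ge0 c) Tsqrtc.
Qed.

Section LinearOperator.
Variable T : V -> V.
Hypothesis linT : forall (a : R[i]) x y, T (a *: x + y) = a *: T x + T y.

Lemma linop0 : T 0 = 0.
Proof.
have := linT 1 0 0; rewrite !scale1r addr0 => T0D.
by apply: (addrI (T 0)); rewrite addr0 -T0D.
Qed.

Lemma linopD x y : T (x + y) = T x + T y.
Proof. by rewrite -[x in LHS]scale1r linT scale1r. Qed.

Lemma linopZ a x : T (a *: x) = a *: T x.
Proof. by rewrite -[a *: x]addr0 linT linop0 addr0. Qed.

End LinearOperator.

Lemma Im_ip_positive_op P x : positive_op ip P -> Im (ip (P x) x) = 0.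
Proof. by case=> _ P_ge0; exact: ger0_Im. Qed.

(* Polarisation: [Im <Pz,z> = 0] for [z = x + y] and [z = x + iy] determines
   [<Px,y>] from [<x,Py>]. *)
Lemma positive_op_selfadj P x y : positive_op ip P -> ip (P x) y = ip x (P y).
Proof.
move=> Ppos; have [[linP _] _] := Ppos.
have ImP z : Im (ip (P z) z) = 0 by exact: Im_ip_positive_op.
have Exy := ImP (x + y); have Exiy := ImP (x + 'i *: y).
rewrite linopD // !(ipDl Hip, ipDr Hip) !ImD ImP (ImP y) in Exy.
rewrite linopD // linopZ // !(ipDl Hip, ipDr Hip, ipZl Hip, ipZr Hip) in Exiy.
rewrite !(ImD, ImM, ReM, ReJ, ImJ) ImP (ImP y) /= in Exiy.
rewrite [RHS](ipJ Hip); apply: eq_ReIm; rewrite ?ReJ ?ImJ; lra.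
Qed.

End Operators.

Section PositivePair.
Variables (R : realType) (V : lmodType R[i]) (ip : V -> V -> R[i]).
Hypothesis Hip : is_inner_product ip.
Variables P Q : V -> V.
Hypotheses (Ppos : positive_op ip P) (Qpos : positive_op ip Q).
Implicit Types x : V.

Local Notation sqr_sum x := (hnorm ip (P x) ^+ 2 + hnorm ip (Q x) ^+ 2).

Lemma Re_ip_sqr_add x : Re (ip (P (P x) + Q (Q x)) x) = sqr_sum x.
Proof.
rewrite (ipDl Hip) ReD (positive_op_selfadj Hip (P x) x Ppos).
by rewrite (positive_op_selfadj Hip (Q x) x Qpos) -!(sqr_hnorm Hip).
Qed.

Lemma sqr_normc_ip_addi x :
  hnorm ip x = 1 -> normc (ip (P x + 'i *: Q x) x) ^+ 2 <= sqr_sum x.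
Proof.
move=> x1; rewrite sqr_normc_ReIm (ipDl Hip) (ipZl Hip) ReD ImD ReM ImM.
rewrite (Im_ip_positive_op x Ppos) (Im_ip_positive_op x Qpos) /=.
have := Re_ip_sqr_le Hip (P x) x; have := Re_ip_sqr_le Hip (Q x) x.
rewrite x1; lra.
Qed.

Lemma normc_ip_mul x : normc (ip (P (Q x)) x) <= sqr_sum x / 2.
Proof.
rewrite (positive_op_selfadj Hip _ _ Ppos); apply: le_trans (normc_ip_le Hip _ _) _.
have := sqr_ge0 (hnorm ip (Q x) - hnorm ip (P x)); lra.
Qed.

Local Notation S := (fun x => P (P x) + Q (Q x)).

Lemma op_bounded_sqr_add : exists M, op_bounded_by ip S M.
Proof.
have [[_ [M PM]] _] := Ppos; have [[_ [N QN]] _] := Qpos.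
have PPM := @op_bounded_by_comp _ _ ip P P M M PM PM.
have QQN := @op_bounded_by_comp _ _ ip Q Q N N QN QN.
by eexists; exact (op_bounded_by_add Hip PPM QQN).
Qed.

Lemma opnorm_sqr_add_ge0 : 0 <= opnorm ip S.
Proof. by have [M SM] := op_bounded_sqr_add; exact: opnorm_ge0 SM. Qed.

Lemma sqr_sum_le_opnorm x : hnorm ip x = 1 -> sqr_sum x <= opnorm ip S.
Proof.
move=> x1; have [M SM] := op_bounded_sqr_add.
rewrite -Re_ip_sqr_add; apply: le_trans (Re_ip_le Hip _ _) _.
by rewrite x1 mulr1 (opnorm_ge SM).
Qed.

Lemma sqr_numrad_addi_le : numrad ip (fun x => P x + 'i *: Q x) ^+ 2 <= opnorm ip S.
Proof.
apply: numrad_sqr_le opnorm_sqr_add_ge0 _ => x x1.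
exact: le_trans (sqr_normc_ip_addi x1) (sqr_sum_le_opnorm x1).
Qed.

Lemma numrad_mul_le : numrad ip (fun x => P (Q x)) <= opnorm ip S / 2.
Proof.
apply: numrad_le => [|x x1]; first by rewrite divr_ge0 ?opnorm_sqr_add_ge0.
apply: le_trans (normc_ip_mul x) _.
by rewrite ler_pM2r ?invr_gt0 // sqr_sum_le_opnorm.
Qed.

End PositivePair.

Theorem mainTheorem2 (R : realType) (V : lmodType R[i]) (ip : V -> V -> R[i])
  (Hip : is_inner_product ip) (Hcomplete : hcomplete ip)
  (A As absA absAs : V -> V)
  (HA : bounded_op ip A) (HAs : is_adjoint ip A As)
  (HabsA : is_abs_op ip A As absA) (HabsAs : is_abs_op ip As A absAs) :
  4^-1 * numrad ip (fun x => absA x + 'i%C *: absAs x) ^+ 2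
  + 8^-1 * opnorm ip (fun x => absA (absA x) + absAs (absAs x))
  + 4^-1 * numrad ip (fun x => absA (absAs x))
  <= 2^-1 * opnorm ip (fun x => As (A x) + A (As x)).
Proof.
case: HabsA => Ppos PP; case: HabsAs => Qpos QQ.
have -> : (fun x => As (A x) + A (As x)) = (fun x => absA (absA x) + absAs (absAs x)).
  by apply: funext => x; rewrite PP QQ.
have := opnorm_sqr_add_ge0 Hip Ppos Qpos.
have := sqr_numrad_addi_le Hip Ppos Qpos; have := numrad_mul_le Hip Ppos Qpos.
lra.
Qed.
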